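(* Let $p$ be an odd prime and let $R$ be a local nearring whose additive group is $G_1=\langle a\rangle+\langle b\rangle+\langle c\rangle$ with $ap=bp=cp=0$, $a+b=b+a+c$, $c$ central, where $a$ is the identity element of $R$, $c=-a-b+a+b$, and the subgroup $L$ of non-invertible elements equals $\langle b\rangle+\langle c\rangle$. Write elements as $x=ax_1+bx_2+cx_3$ ($0\le x_i<p$) and define $\alpha,\beta,\gamma\colon R\to\mathbb Z_p$ by $xb=a\alpha(x)+b\beta(x)+c\gamma(x)$. Then for $x,y\in R$, $$x\cdot y=ax_1y_1+b(x_2y_1+\beta(x)y_2)+c\Big(-x_1x_2\tbinom{y_1}{2}+x_3y_1+\gamma(x)y_2+x_1\beta(x)y_3\Big),$$ and moreover: (0) $\alpha(0)\equiv\beta(0)\equiv\gamma(0)\equiv0\pmod p$ if and only if $R$ is zero-symmetric; (1) $\alpha(x)\equiv 0\pmod p$ for all $x$; (2) if $\beta(x)\equiv0\pmod p$ then $x_1\equiv0\pmod p$; (3) $\beta(xy)\equiv\beta(x)\beta(y)\pmod p$; (4) $\gamma(xy)\equiv\gamma(x)\beta(y)+x_1\beta(x)\gamma(y)\pmod p$.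
   Context: A (left) nearring is a set $R$ with operations $+,\cdot$ such that $(R,+)$ is a group with neutral element $0$, $(R,\cdot)$ is a semigroup, and $x(y+z)=xy+xz$ for all $x,y,z$. A nearring with identity (i.e. $(R,\cdot)$ a monoid) is local if the set $L$ of its non-invertible elements is a subgroup of $(R,+)$. $R$ is zero-symmetric if $0\cdot x=0$ for all $x$. Additive notation: $gk$ is $g$ added $k$ times. *)

From mathcomp Require Import all_boot all_algebra.
Set Implicit Arguments. Unset Strict Implicit. Unset Printing Implicit Defensive.
Import GRing.Theory.
Local Open Scope ring_scope.

(* The group G_1 (Heisenberg group of order p^3), in normal-form coordinates:
   the triple (x1,x2,x3) stands for a x1 + b x2 + c x3. *)
Definition G1 (p : nat) := ('Z_p * 'Z_p * 'Z_p)%type.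

Section G1ops.
Variable p : nat.
Implicit Types x y : G1 p.

Definition g1 x : 'Z_p := x.1.1.
Definition g2 x : 'Z_p := x.1.2.
Definition g3 x : 'Z_p := x.2.

(* (a x1 + b x2 + c x3) + (a y1 + b y2 + c y3)
     = a (x1+y1) + b (x2+y2) + c (x3 + y3 - x2 y1)  since b + a = a + b - c *)
Definition addG x y : G1 p :=
  (g1 x + g1 y, g2 x + g2 y, g3 x + g3 y - g2 x * g1 y).
Definition zeroG : G1 p := (0, 0, 0).
Definition negG x : G1 p := (- g1 x, - g2 x, - g3 x - g2 x * g1 x).

Definition aG : G1 p := (1, 0, 0).
Definition bG : G1 p := (0, 1, 0).
Definition cG : G1 p := addG (addG (addG (negG aG) (negG bG)) aG) bG.

Definition gmul (g : G1 p) (k : nat) : G1 p := iter k (fun h => addG h g) zeroG.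

Definition elem (k1 k2 k3 : 'Z_p) : G1 p :=
  addG (addG (gmul aG k1) (gmul bG k2)) (gmul cG k3).

Definition is_nearring_with_id (mul : G1 p -> G1 p -> G1 p) : Prop :=
  (forall x y z, mul x (mul y z) = mul (mul x y) z) /\
  (forall x y z, mul x (addG y z) = addG (mul x y) (mul x z)) /\
  (forall x, mul aG x = x /\ mul x aG = x).

Definition invertible (mul : G1 p -> G1 p -> G1 p) x : Prop :=
  exists y, mul x y = aG /\ mul y x = aG.

Definition zero_symmetric (mul : G1 p -> G1 p -> G1 p) : Prop :=
  forall x, mul zeroG x = zeroG.

Definition alpha (mul : G1 p -> G1 p -> G1 p) x : 'Z_p := g1 (mul x bG).
Definition beta  (mul : G1 p -> G1 p -> G1 p) x : 'Z_p := g2 (mul x bG).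
Definition gamma (mul : G1 p -> G1 p -> G1 p) x : 'Z_p := g3 (mul x bG).
End G1ops.

From mathcomp Require Import all_boot all_algebra.
From mathcomp Require Import ring.
Set Implicit Arguments. Unset Strict Implicit. Unset Printing Implicit Defensive.
Import GRing.Theory.
Local Open Scope ring_scope.

(* Left distributivity makes [y |-> x y] an endomorphism of (G_1, +), so [x y]
   is determined by [x a = x] and [x b] once [y] is written as
   [a y1 + b y2 + c y3].  Since [c = -(b + a) + (a + b)] is a commutator,
   [x c = -(x b + x) + (x + x b)] lies in <c>; this yields the product formula,
   with an extra alpha-term.  As [b] is not a unit, alpha vanishes: if
   [alpha x <> 0] then [x b] is a unit, so [b] has a left inverse, and in a
   finite monoid left-invertible elements are units.  The identities for beta
   and gamma are the coordinates of [(x y) b = x (y b)], and [beta a = 1] shows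
   that beta does not vanish on units. *)

Section G1Group.
Variable p : nat.
Implicit Types y u w g : G1 p.

Lemma addG0 u : addG u (zeroG p) = u.
Proof.
by case: u => [[u1 u2] u3]; rewrite /addG /g1 /g2 /g3 /=; congr (_, _, _); ring.
Qed.

Lemma addNG u : addG (negG u) u = zeroG p.
Proof.
by case: u => [[u1 u2] u3]; rewrite /addG /negG /g1 /g2 /g3 /=; congr (_, _, _); ring.
Qed.

Lemma addKG u w : addG (negG u) (addG u w) = w.
Proof.
case: u w => [[u1 u2] u3] [[w1 w2] w3].
by rewrite /addG /negG /g1 /g2 /g3 /=; congr (_, _, _); ring.
Qed.

Lemma addG_bac : addG (addG (bG p) (aG p)) (cG p) = addG (aG p) (bG p).
Proof. by rewrite /cG /addG /negG /g1 /g2 /g3 /=; congr (_, _, _); ring. Qed.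

(* The [c]-coordinate of [g k] picks up one correction [- g2 g * g1 g] per pair
   of summands. *)
Lemma gmulE g (k : nat) :
  gmul g k = (k%:R * g1 g, k%:R * g2 g, k%:R * g3 g - 'C(k, 2)%:R * (g1 g * g2 g)).
Proof.
elim: k => [|k IHk]; first by rewrite /gmul /= /zeroG !mul0r subr0.
rewrite /gmul iterS -/(gmul g k) IHk /addG /g1 /g2 /g3 /=.
by rewrite binS bin1 !natrD !mulrSr; congr (_, _, _); ring.
Qed.

Lemma elemE (k1 k2 k3 : 'Z_p) : elem k1 k2 k3 = (k1, k2, k3).
Proof.
rewrite /elem !gmulE /cG /addG /negG /aG /bG /g1 /g2 /g3 /= !natr_Zp.
by congr (_, _, _); ring.
Qed.

Lemma elem_coord y : elem (g1 y) (g2 y) (g3 y) = y.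
Proof. by rewrite elemE; case: y => [[? ?] ?]. Qed.

End G1Group.

Section NearringOnG1.
Variables (p : nat) (mul : G1 p -> G1 p -> G1 p).
Hypothesis mul_nearring : is_nearring_with_id mul.
Implicit Types x y z g : G1 p.

Lemma mulA x y z : mul x (mul y z) = mul (mul x y) z.
Proof. by case: mul_nearring. Qed.

Lemma mulDr x y z : mul x (addG y z) = addG (mul x y) (mul x z).
Proof. by case: mul_nearring => _ []. Qed.

Lemma aG_mul x : mul (aG p) x = x.
Proof. by case: mul_nearring => _ [_ /(_ x) []]. Qed.

Lemma mul_aG x : mul x (aG p) = x.
Proof. by case: mul_nearring => _ [_ /(_ x) []]. Qed.

Lemma mul0 x : mul x (zeroG p) = zeroG p.
Proof.
have idem : addG (mul x (zeroG p)) (mul x (zeroG p)) = mul x (zeroG p).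
  by rewrite -mulDr addG0.
by rewrite -[LHS](addKG (mul x (zeroG p))) idem addNG.
Qed.

Lemma mul_gmul x g (k : nat) : mul x (gmul g k) = gmul (mul x g) k.
Proof.
elim: k => [|k IHk]; first exact: mul0.
by rewrite /gmul !iterS -!/(gmul _ _) mulDr IHk.
Qed.

Lemma mul_cG x :
  mul x (cG p) = (0, 0, g1 x * beta mul x - g2 x * alpha mul x).
Proof.
have xbac : addG (addG (mul x (bG p)) x) (mul x (cG p)) = addG x (mul x (bG p)).
  by rewrite -{2 4}[x]mul_aG -!mulDr addG_bac.
rewrite -(addKG (addG (mul x (bG p)) x) (mul x (cG p))) {}xbac /alpha /beta.
case: (mul x (bG p)) => [[b1 b2] b3]; case: x => [[x1 x2] x3].
by rewrite /addG /negG /g1 /g2 /g3 /=; congr (_, _, _); ring.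
Qed.

Lemma mulE x y : mul x y =
  (g1 y * g1 x + g2 y * alpha mul x,
   g1 y * g2 x + g2 y * beta mul x,
   g1 y * g3 x - 'C(val (g1 y), 2)%:R * (g1 x * g2 x)
   + (g2 y * gamma mul x - 'C(val (g2 y), 2)%:R * (alpha mul x * beta mul x))
   - g1 y * g2 x * (g2 y * alpha mul x)
   + g3 y * (g1 x * beta mul x - g2 x * alpha mul x)).
Proof.
rewrite -{1}(elem_coord y) /elem !mulDr !mul_gmul mul_aG mul_cG !gmulE !natr_Zp.
rewrite /addG /alpha /beta /gamma.
case: (mul x (bG p)) => [[b1 b2] b3].
by rewrite /g1 /g2 /g3 /=; congr (_, _, _); ring.
Qed.

Lemma zero_symmetricP :
  (alpha mul (zeroG p) = 0 /\ beta mul (zeroG p) = 0 /\ gamma mul (zeroG p) = 0)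
  <-> zero_symmetric mul.
Proof.
split=> [[a0 [b0 c0]] y | zs]; last by rewrite /alpha /beta /gamma zs.
by rewrite mulE a0 b0 c0 /zeroG /g1 /g2 /g3 /=; congr (_, _, _); ring.
Qed.

(* Finiteness of G1 is what turns the injectivity of [mul y] into surjectivity. *)
Lemma left_inverse_invertible v y : mul v y = aG p -> invertible mul y.
Proof.
move=> vy; have mulyK : cancel (mul y) (mul v) by move=> z; rewrite mulA vy aG_mul.
by exists v; split=> //; rewrite -[v]mul_aG (canF_sym mulyK).
Qed.

Lemma beta_aG : beta mul (aG p) = 1.
Proof. by rewrite /beta aG_mul. Qed.

End NearringOnG1.

Section LocalNearringOnG1.
Variables (p : nat) (mul : G1 p -> G1 p -> G1 p).
Hypothesis mul_nearring : is_nearring_with_id mul.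
Hypothesis nonunitE : forall x : G1 p, ~ invertible mul x <-> g1 x = 0.
Implicit Types x y : G1 p.

Lemma alpha_eq0 x : alpha mul x = 0.
Proof.
apply: (nonunitE (mul x (bG p))).1 => -[u [_ uxb]].
have b_nonunit : ~ invertible mul (bG p) by apply/nonunitE.
apply: b_nonunit; apply: (left_inverse_invertible mul_nearring (v := mul u x)).
by rewrite -(mulA mul_nearring).
Qed.

Lemma beta_mul x y : beta mul (mul x y) = beta mul x * beta mul y.
Proof.
rewrite {1}/beta -(mulA mul_nearring) (mulE mul_nearring x) {1}/g2 /=.
by rewrite -/(alpha mul y) -/(beta mul y) alpha_eq0 mul0r add0r mulrC.
Qed.

Lemma gamma_mul x y :
  gamma mul (mul x y) = gamma mul x * beta mul y + g1 x * beta mul x * gamma mul y.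
Proof.
rewrite {1}/gamma -(mulA mul_nearring) (mulE mul_nearring x) {1}/g3 /=.
rewrite -/(alpha mul y) -/(beta mul y) -/(gamma mul y) !alpha_eq0 bin0n /=.
by ring.
Qed.

Lemma beta_eq0_g1 x : beta mul x = 0 -> g1 x = 0.
Proof.
move=> bx0; apply: (nonunitE x).1 => -[u [_ ux]].
have := congr1 (beta mul) ux.
by rewrite beta_mul bx0 mulr0 (beta_aG mul_nearring) => /eqP; rewrite eq_sym oner_eq0.
Qed.

End LocalNearringOnG1.

Theorem lemma6 (p : nat) (hp : prime p) (hodd : odd p)
  (mul : G1 p -> G1 p -> G1 p)
  (hnr : is_nearring_with_id mul)
  (hL : forall x : G1 p, ~ invertible mul x <->
          exists k2 k3 : 'Z_p, x = elem 0 k2 k3) :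
  (forall x y : G1 p,
     mul x y =
     elem (g1 x * g1 y)
          (g2 x * g1 y + beta mul x * g2 y)
          (- (g1 x * g2 x * ('C(val (g1 y), 2))%:R) + g3 x * g1 y
           + gamma mul x * g2 y + g1 x * beta mul x * g3 y)) /\
  ((alpha mul (zeroG p) = 0 /\ beta mul (zeroG p) = 0 /\ gamma mul (zeroG p) = 0)
     <-> zero_symmetric mul) /\
  (forall x, alpha mul x = 0) /\
  (forall x, beta mul x = 0 -> g1 x = 0) /\
  (forall x y, beta mul (mul x y) = beta mul x * beta mul y) /\
  (forall x y, gamma mul (mul x y) =
                 gamma mul x * beta mul y + g1 x * beta mul x * gamma mul y).
Proof.
have nonunitE x : ~ invertible mul x <-> g1 x = 0.
  rewrite hL; split=> [[k2 [k3 ->]] | x10]; first by rewrite elemE.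
  by exists (g2 x), (g3 x); rewrite -x10 elem_coord.
have alpha0 := alpha_eq0 hnr nonunitE.
split=> [x y | ].
  by rewrite elemE (mulE hnr) alpha0; congr (_, _, _); ring.
split; first exact: zero_symmetricP.
split; first exact: alpha0.
split; first exact: beta_eq0_g1 hnr nonunitE.
split; first exact: beta_mul hnr nonunitE.
exact: gamma_mul hnr nonunitE.
Qed.
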